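(* Let $q$ be a prime power, $m>4$, $F=\mathbb F_q$, $V=\mathbb F_q^m$. Let $E\subset E_1$ be subspaces of $\bigwedge^2V$ with $\dim E_1=\dim E+1$, and assume $E$ is decomposable of dimension $r\ge1$ and $E_1$ is not decomposable. Then $E_1\setminus E$ contains at most $q^{r-1}(q-1)$ decomposable elements.
   Context: A nonzero $\omega\in\bigwedge^2V$ is decomposable if $\omega=u\wedge v$ for some $u,v\in V$; a subspace of $\bigwedge^2V$ is decomposable if all its nonzero elements are decomposable. *)

(* Λ²V for V = F^m is modelled by alternating m×m matrices,
   with u ∧ v ↦ u^T v - v^T u (row vectors u v : 'rV_m). *)
From HB Require Import structures.
From mathcomp Require Import all_boot all_order all_algebra all_field.
Set Implicit Arguments. Unset Strict Implicit. Unset Printing Implicit Defensive.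
Import GRing.Theory.
Local Open Scope ring_scope.

Section Wedge.
Variables (F : finFieldType) (m : nat).

Definition wedge (u v : 'rV[F]_m) : 'M[F]_m := u^T *m v - v^T *m u.

Definition alternating (A : 'M[F]_m) : bool :=
  (A^T == - A) && [forall i, A i i == 0].

Definition decomposable (w : 'M[F]_m) : bool :=
  (w != 0) && [exists u : 'rV[F]_m, exists v : 'rV[F]_m, w == wedge u v].

Definition decomposable_space (E : {vspace 'M[F]_m}) : Prop :=
  forall w, w \in E -> w != 0 -> decomposable w.

End Wedge.

From HB Require Import structures.
From mathcomp Require Import all_boot all_order all_algebra all_field.
From mathcomp Require Import ring.
Set Implicit Arguments. Unset Strict Implicit. Unset Printing Implicit Defensive.
Import GRing.Theory.
Local Open Scope ring_scope.

(* A nonzero w is decomposable iff it satisfies the Plücker relations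
   w_ij w_kl - w_ik w_jl + w_il w_jk = 0.  Pick a non-decomposable w0 in E1, so
   that E1 = E + F w0 and every decomposable element of E1 \ E is c (w0 + e)
   with c <> 0 and e in E.  For two admissible e, e', the difference e - e' lies
   in E, hence is decomposable, so the polar form of the Plücker relations
   vanishes on the pair (w0 + e, w0 + e'); the relations therefore hold on the
   whole span L of the admissible w0 + e.  Since w0 is not in L, the admissible e
   lie in one coset of the proper subspace L ∩ E of E: at most q^(r-1) choices
   of e, and q - 1 of c. *)

Lemma span_ind (K : fieldType) (vT : vectType K) (P : vT -> Prop) (X : seq vT) :
  P 0 -> (forall x y, P x -> P y -> P (x + y)) -> (forall c x, P x -> P (c *: x)) ->
  {in X, forall x, P x} -> {in <<X>>%VS, forall x, P x}.
Proof.
move=> P0 PD PZ PX x /(@coord_span _ _ _ (in_tuple X)) ->.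
by apply: big_ind => // i _; apply/PZ/PX/mem_nth.
Qed.

Lemma addv_line_codim1 (K : fieldType) (vT : vectType K) (E E1 : {vspace vT}) w :
  (E <= E1)%VS -> \dim E1 = (\dim E).+1 -> w \in E1 -> w \notin E ->
  E1 = (E + <[w]>)%VS.
Proof.
move=> sEE1 dimE1 wE1 wNE; apply/eqP; rewrite eq_sym eqEdim subv_add sEE1.
rewrite -memvE wE1 dimE1 (ltn_leqif (dimv_leqif_eq (addvSl E <[w]>))).
by apply: contra wNE => /eqP->; rewrite memvE addvSr.
Qed.

Section Plucker.
Variables (F : finFieldType) (m : nat).
Implicit Types A B : 'M[F]_m.

Definition plucker A i j k l := A i j * A k l - A i k * A j l + A i l * A j k.

Definition plucker_polar A B i j k l :=
  A i j * B k l + B i j * A k l - (A i k * B j l + B i k * A j l)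
  + (A i l * B j k + B i l * A j k).

Definition plucker_null A := forall i j k l, plucker A i j k l = 0.
Definition plucker_orth A B := forall i j k l, plucker_polar A B i j k l = 0.

Lemma pluckerD A B i j k l :
  plucker (A + B) i j k l = plucker A i j k l + plucker B i j k l + plucker_polar A B i j k l.
Proof. rewrite /plucker /plucker_polar !mxE; ring. Qed.

Lemma pluckerB A B i j k l :
  plucker (A - B) i j k l = plucker A i j k l + plucker B i j k l - plucker_polar A B i j k l.
Proof. rewrite /plucker /plucker_polar !mxE; ring. Qed.

Lemma pluckerZ c A i j k l : plucker (c *: A) i j k l = c ^+ 2 * plucker A i j k l.
Proof. rewrite /plucker !mxE; ring. Qed.

Lemma plucker0 i j k l : plucker 0 i j k l = 0.
Proof. rewrite /plucker !mxE; ring. Qed.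

Lemma plucker_polar0l B i j k l : plucker_polar 0 B i j k l = 0.
Proof. rewrite /plucker_polar !mxE; ring. Qed.

Lemma plucker_polarDl A A' B i j k l :
  plucker_polar (A + A') B i j k l = plucker_polar A B i j k l + plucker_polar A' B i j k l.
Proof. rewrite /plucker_polar !mxE; ring. Qed.

Lemma plucker_polarZl c A B i j k l :
  plucker_polar (c *: A) B i j k l = c * plucker_polar A B i j k l.
Proof. rewrite /plucker_polar !mxE; ring. Qed.

Lemma plucker_polarC A B i j k l : plucker_polar A B i j k l = plucker_polar B A i j k l.
Proof. rewrite /plucker_polar; ring. Qed.

Lemma plucker_orth_sub A B :
  plucker_null A -> plucker_null B -> plucker_null (A - B) -> plucker_orth A B.
Proof.
move=> nA nB nAB i j k l; apply/eqP; rewrite -oppr_eq0; apply/eqP.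
by rewrite -(nAB i j k l) pluckerB nA nB add0r sub0r.
Qed.

Lemma plucker_orth_span (X : seq 'M[F]_m) :
  {in X &, forall x y, plucker_orth x y} -> {in <<X>>%VS &, forall x y, plucker_orth x y}.
Proof.
move=> orthX.
have orth_spanX z : z \in X -> {in <<X>>%VS, forall x, plucker_orth x z}.
  move=> zX; apply: span_ind => [i j k l | x1 x2 o1 o2 i j k l | c x1 o1 i j k l |].
  - exact: plucker_polar0l.
  - by rewrite plucker_polarDl o1 o2 addr0.
  - by rewrite plucker_polarZl o1 mulr0.
  - by move=> x1 x1X; apply: orthX.
move=> x y xL; move: y; apply: (span_ind (P := plucker_orth x)).
- by move=> i j k l; rewrite plucker_polarC plucker_polar0l.
- move=> y1 y2 o1 o2 i j k l.
  by rewrite plucker_polarC plucker_polarDl -!(plucker_polarC x) o1 o2 addr0.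
- move=> c y1 o1 i j k l.
  by rewrite plucker_polarC plucker_polarZl plucker_polarC o1 mulr0.
- by move=> z zX; apply: orth_spanX.
Qed.

Lemma plucker_null_span (X : seq 'M[F]_m) :
  {in X, forall x, plucker_null x} -> {in X &, forall x y, plucker_null (x - y)} ->
  {in <<X>>%VS, forall x, plucker_null x}.
Proof.
move=> nullX nullXB.
have orthL : {in <<X>>%VS &, forall x y, plucker_orth x y}.
  apply: plucker_orth_span => x y xX yX.
  by apply: plucker_orth_sub; [apply: nullX | apply: nullX | apply: nullXB].
suff: {in <<X>>%VS, forall x, x \in <<X>>%VS /\ plucker_null x} by move=> H x /H[].
apply: span_ind => [|x y [xL nx] [yL ny] | c x [xL nx] | x xX].
- by split=> [|i j k l]; rewrite ?mem0v ?plucker0.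
- split=> [|i j k l]; first exact: rpredD.
  by rewrite pluckerD nx ny (orthL x y xL yL) !add0r.
- by split=> [|i j k l]; rewrite ?memvZ // pluckerZ nx mulr0.
- by split; [exact: memv_span | exact: nullX].
Qed.

Lemma wedgeE (u v : 'rV[F]_m) i j : wedge u v i j = u 0 i * v 0 j - v 0 i * u 0 j.
Proof. by rewrite /wedge !mxE !big_ord1 !mxE. Qed.

Lemma decomposable_plucker A : decomposable A -> plucker_null A.
Proof. by case/andP=> _ /existsP[u /existsP[v /eqP->]] i j k l; rewrite /plucker !wedgeE; ring. Qed.

Lemma plucker_decomposable A : A != 0 -> plucker_null A -> decomposable A.
Proof.
move=> An0 nA; rewrite /decomposable An0 /=.
have [[a b] /= Aab | A0] := pickP (fun p : 'I_m * 'I_m => A p.1 p.2 != 0); last first.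
  by case/negP: An0; apply/eqP/matrixP => i j; move/negbFE/eqP: (A0 (i, j)); rewrite mxE.
(* The relation at (a, b, i, j) expresses A as (A a b)^-1 (row a A) ∧ (row b A). *)
apply/existsP; exists ((A a b)^-1 *: row a A); apply/existsP; exists (row b A).
apply/eqP/matrixP => i j; rewrite wedgeE !mxE.
have Aij : A a b * A i j = A a i * A b j - A a j * A b i.
  by apply/eqP; rewrite -subr_eq0 -(nA a b i j) /plucker; apply/eqP; ring.
by apply: (mulfI Aab); rewrite Aij; field.
Qed.

Lemma decomposableZ c A : c != 0 -> decomposable A -> decomposable (c *: A).
Proof.
move=> cn0 dA; apply: plucker_decomposable.
  by rewrite scaler_eq0 negb_or cn0; case/andP: dA.
by move=> i j k l; rewrite pluckerZ (decomposable_plucker dA) mulr0.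
Qed.

Definition decomposable_shifts (E : {vspace 'M[F]_m}) w0 :=
  [set e | (e \in E) && decomposable (w0 + e)].

Lemma card_decomposable_shifts (E : {vspace 'M[F]_m}) w0 :
  decomposable_space E -> w0 != 0 -> ~~ decomposable w0 ->
  (#|decomposable_shifts E w0| <= #|F| ^ (\dim E).-1)%N.
Proof.
move=> decE w0n0 ndw0; set S := decomposable_shifts E w0.
have [-> | [e0 e0S]] := set_0Vmem S; first by rewrite cards0.
have shiftsE e : e \in S -> e \in E by rewrite inE => /andP[].
set L := <<[seq (w0 + e)%R | e <- enum S]>>%VS.
have shiftL e : e \in S -> w0 + e \in L by move=> eS; rewrite memv_span ?map_f ?mem_enum.
have nullL : {in L, forall x, plucker_null x}.
  apply: plucker_null_span => [x /mapP[e eS ->] | x y /mapP[e eS ->] /mapP[e' e'S ->]].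
    by move: eS; rewrite mem_enum inE => /andP[_ /decomposable_plucker].
  move: eS e'S; rewrite !mem_enum => /shiftsE eE /shiftsE e'E.
  rewrite opprD addrACA subrr add0r.
  have [-> | nz] := eqVneq (e - e') 0; first exact: plucker0.
  by apply/decomposable_plucker/decE; rewrite ?rpredB.
have ltLE : (\dim (L :&: E) < \dim E)%N.
  rewrite ltnNge; apply: contra ndw0 => leEL.
  have capLE : (L :&: E)%VS = E by apply/eqP; rewrite eqEdim capvSr.
  have sEL : (E <= L)%VS by rewrite -capLE capvSl.
  have w0L : w0 \in L by rewrite -(addrK e0 w0) rpredB ?shiftL ?(subvP sEL) ?shiftsE.
  exact: plucker_decomposable w0n0 (nullL w0 w0L).
have card_LE : (#|(L :&: E)%VS| <= #|F| ^ (\dim E).-1)%N.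
  have q_gt0 : (0 < #|F|)%N by apply/card_gt0P; exists 0.
  by rewrite card_vspace leq_pexp2l //; case: (\dim E) ltLE.
apply: leq_trans card_LE.
rewrite -(card_imset _ (addIr (- e0))); apply/subset_leq_card/subsetP => _ /imsetP[e eS ->].
rewrite memv_cap (rpredB (shiftsE _ eS) (shiftsE _ e0S)) andbT.
have -> : e - e0 = (w0 + e) - (w0 + e0) by rewrite opprD addrACA subrr add0r.
by rewrite rpredB ?shiftL.
Qed.

Lemma card_decomposable_addv_line (E : {vspace 'M[F]_m}) w0 :
  w0 \notin E ->
  (#|[set w | (w \in (E + <[w0]>)%VS) && (w \notin E) && decomposable w]|
     <= #|F|.-1 * #|decomposable_shifts E w0|)%N.
Proof.
move=> w0NE; pose shift (p : F * 'M[F]_m) := p.1 *: (w0 + p.2).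
have sub : [set w | (w \in (E + <[w0]>)%VS) && (w \notin E) && decomposable w]
    \subset shift @: setX [set~ 0] (decomposable_shifts E w0).
  apply/subsetP => w; rewrite inE => /andP[/andP[/memv_addP[e eE [v /vlineP[c ->] ->]]]].
  have [-> | cn0] := eqVneq c 0; first by rewrite scale0r addr0 eE.
  move=> _ dw; apply/imsetP; exists (c, c^-1 *: e); rewrite ?inE /= ?cn0 ?memvZ //=.
    rewrite -[w0 + _](scalerK cn0) scalerDr scalerA mulfV // scale1r addrC.
    by apply: decomposableZ; rewrite ?invr_eq0.
  by rewrite /shift /= scalerDr scalerA mulfV // scale1r addrC.
apply: leq_trans (subset_leq_card sub) (leq_trans (leq_imset_card _ _) _).
by rewrite cardsX cardsC1.
Qed.

End Plucker.

Theorem lemma6p4 (F : finFieldType) (m : nat) (E E1 : {vspace 'M[F]_m}) :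
  (4 < m)%N ->
  (forall w, w \in E1 -> alternating w) ->
  (E <= E1)%VS ->
  \dim E1 = (\dim E).+1 ->
  (1 <= \dim E)%N ->
  decomposable_space E ->
  ~ decomposable_space E1 ->
  (#|[set w : 'M[F]_m | (w \in E1) && (w \notin E) && decomposable w]|
     <= #|F| ^ (\dim E).-1 * #|F|.-1)%N.
Proof.
(* The bound holds without the assumptions m > 4, alternation and r >= 1. *)
move=> _ _ sEE1 dimE1 _ decE ndecE1.
have [w0 /and3P[w0E1 w0n0 ndw0]] :
    exists w0, [&& w0 \in E1, w0 != 0 & ~~ decomposable w0].
  apply/existsP; apply: contraT => /existsPn noW; exfalso; apply: ndecE1 => w wE1 wn0.
  by move: (noW w); rewrite wE1 wn0 negbK.
have w0NE : w0 \notin E by apply: contra ndw0 => /decE; apply.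
rewrite (addv_line_codim1 sEE1 dimE1 w0E1 w0NE) mulnC.
apply: leq_trans (card_decomposable_addv_line w0NE) _.
by rewrite leq_mul2l card_decomposable_shifts ?orbT.
Qed.
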